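(* Let $N\in\mathbb{C}^{m\times n}$ have rank $r$ and singular value decomposition $N=U\begin{pmatrix}\Sigma & 0\\ 0 & 0\end{pmatrix}V^{\ast}$, where $\Sigma\in\mathbb{C}^{r\times r}$ is diagonal with positive diagonal entries and $U\in\mathbb{C}^{m\times m}$, $V\in\mathbb{C}^{n\times n}$ are unitary. Let $X\in\mathbb{C}^{m\times m}$ be arbitrary. Suppose that one of the following conditions holds: (C1) $NN^{\ast}X$ is normal; (C2) there exist $0\neq c_{1}\in\mathbb{C}$ and $k_{1}\in\mathbb{N}^{+}$ such that $(NN^{\ast}X)^{k_{1}}=c_{1}NN^{\dagger}$; (C3) there exist $0\neq c_{2}\in\mathbb{C}$, $\ell\in\mathbb{N}^{+}$ and $k_{2}\in\mathbb{N}^{+}$ such that $(NN^{\ast}X)^{k_{2}}=c_{2}(NN^{\ast})^{\ell}$; (C4) $XE_{N}$ is normal; (C5) there exist $0\neq c_{3}\in\mathbb{C}$ and $k_{3}\in\mathbb{N}^{+}$ such that $(XE_{N})^{k_{3}}=c_{3}E_{N}$; (C6) $NN^{\dagger}XE_{N}=0$; (C7) there exists $k_{4}\in\mathbb{N}^{+}$ such that $(NN^{\ast})^{k_{4}}XE_{N}=0$. Then $X=U\begin{pmatrix}X_{1} & 0\\ X_{2} & X_{4}\end{pmatrix}U^{\ast}$ for some $X_{1}\in\mathbb{C}^{r\times r}$, $X_{2}\in\mathbb{C}^{(m-r)\times r}$, $X_{4}\in\mathbb{C}^{(m-r)\times(m-r)}$.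
   Context: $\mathbb{N}^{+}$ is the set of positive integers. For a complex matrix $A$, $A^{\ast}$ is its conjugate transpose, $A^{\dagger}$ its Moore--Penrose inverse, and $E_{A}:=I-AA^{\dagger}$. A square matrix $B$ is normal if $BB^{\ast}=B^{\ast}B$. *)

From mathcomp Require Import all_boot all_order all_algebra.
From mathcomp Require Import sesquilinear spectral.
From mathcomp Require Import complex.
From mathcomp Require Import Rstruct.
Set Implicit Arguments. Unset Strict Implicit. Unset Printing Implicit Defensive.
Import Order.TTheory GRing.Theory Num.Theory.
Local Open Scope ring_scope.
Local Open Scope sesquilinear_scope.

Definition C : numClosedFieldType := (Rdefinitions.R)[i]%C.

(* G is the Moore--Penrose inverse of A, i.e. G satisfies the four Penrose
   equations (such a G exists and is unique, so this pins down A^dagger). *)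
Definition is_MP_inverse (m n : nat) (A : 'M[C]_(m, n)) (G : 'M[C]_(n, m)) : Prop :=
  [/\ A *m G *m A = A, G *m A *m G = G,
      (A *m G) ^t* = A *m G & (G *m A) ^t* = G *m A].

From mathcomp Require Import all_boot all_order all_algebra.
From mathcomp Require Import sesquilinear spectral.
From mathcomp Require Import complex.
From mathcomp Require Import Rstruct.
Set Implicit Arguments. Unset Strict Implicit. Unset Printing Implicit Defensive.
Import Order.TTheory GRing.Theory Num.Theory.
Local Open Scope ring_scope.
Local Open Scope sesquilinear_scope.

(* Conjugation by U turns N N^dagger into the coordinate projection
   diag(1, 0), E_N into diag(0, 1) and N N^* into diag(Sigma Sigma^*, 0), with
   Sigma Sigma^* invertible; the claim is that the upper right block Y2 of
   U^* X U vanishes.  All seven conditions are invariant under unitary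
   similarity, and in these coordinates each one concerns a block triangular
   matrix whose off-diagonal block is Y2 up to an invertible factor.  Normality
   kills that block because B^* B = 0 only for B = 0; a power equal to an
   invertible corner kills it because the diagonal block is then invertible. *)

Lemma diag_mx_pos_unit (R : numFieldType) n (S : 'M[R]_n) :
  is_diag_mx S -> (forall i, 0 < S i i) -> S \in unitmx.
Proof.
case/diag_mxP=> d -> Spos; rewrite unitmxE det_diag unitfE.
by apply/prodf_neq0 => i _; have := Spos i; rewrite mxE eqxx mulr1n => /gt_eqF ->.
Qed.

Section ConjugateTranspose.
Variable F : numClosedFieldType.

Lemma trmxC_mul m n k (A : 'M[F]_(m, n)) (B : 'M[F]_(n, k)) :
  (A *m B)^t* = B^t* *m A^t*.
Proof. by rewrite trmx_mul map_mxM. Qed.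

Lemma trmxC0 m n : (0 : 'M[F]_(m, n))^t* = 0.
Proof. by rewrite trmx0 map_mx0. Qed.

Lemma trmxC_block m1 m2 n1 n2 (A : 'M[F]_(m1, n1)) (B : 'M[F]_(m1, n2))
    (C : 'M[F]_(m2, n1)) (D : 'M[F]_(m2, n2)) :
  (block_mx A B C D)^t* = block_mx (A^t*) (C^t*) (B^t*) (D^t*).
Proof. by rewrite tr_block_mx map_block_mx. Qed.

Lemma mulmx_trmxC_eq0 m n (M : 'M[F]_(m, n)) : M *m M^t* = 0 -> M = 0.
Proof.
move=> MMt0; apply/matrixP=> i j; rewrite mxE.
have /matrixP/(_ i i) := MMt0; rewrite !mxE => /psumr_eq0P/(_ j isT).
rewrite !mxE => Mij0; apply/eqP; rewrite -mul_conjC_eq0 Mij0 // => k _.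
by rewrite !mxE mul_conjC_ge0.
Qed.

Lemma trmxC_mulmx_eq0 m n (M : 'M[F]_(m, n)) : M^t* *m M = 0 -> M = 0.
Proof.
by rewrite -{2}[M]trmxCK => /mulmx_trmxC_eq0 Mt0; rewrite -[M]trmxCK Mt0 trmxC0.
Qed.

Lemma normalmx_block_top m n (A : 'M[F]_m) (B : 'M[F]_(m, n)) :
  block_mx A B 0 0 \is normalmx -> B = 0.
Proof.
move/normalmxP; rewrite trmxC_block !trmxC0 !mulmx_block.
rewrite !mulmx0 !mul0mx !addr0 => /eq_block_mx[_ _ _ BtB0].
by apply: trmxC_mulmx_eq0; rewrite -BtB0.
Qed.

Lemma normalmx_block_right m n (B : 'M[F]_(m, n)) (D : 'M[F]_n) :
  block_mx 0 B 0 D \is normalmx -> B = 0.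
Proof.
move/normalmxP; rewrite trmxC_block !trmxC0 !mulmx_block.
by rewrite !mulmx0 !mul0mx !addr0 !add0r => /eq_block_mx[/mulmx_trmxC_eq0].
Qed.

Lemma block_pinv_proj r p q (Sigma : 'M[F]_r) (W : 'M[F]_(r + q, r + p)) :
  let D := block_mx Sigma 0 0 0 : 'M_(r + p, r + q) in
  Sigma \in unitmx -> D *m W *m D = D -> (D *m W)^t* = D *m W ->
  D *m W = pid_mx r.
Proof.
move=> D Sunit DWD DWh.
have DW : D *m W = block_mx (Sigma *m ulsubmx W) (Sigma *m ursubmx W) 0 0.
  by rewrite /D -{1}[W]submxK mulmx_block !mul0mx !addr0.
have SW1 : Sigma *m ulsubmx W = 1%:M.
  move: DWD; rewrite DW /D mulmx_block !mulmx0 !mul0mx !addr0.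
  case/eq_block_mx=> SWS _ _ _.
  by rewrite -(mulmxK Sunit (Sigma *m _)) SWS mulmxV.
have SW2 : Sigma *m ursubmx W = 0.
  move: DWh; rewrite DW trmxC_block !trmxC0 => /eq_block_mx[_ _ SW2h _].
  by rewrite -[Sigma *m _]trmxCK SW2h trmxC0.
by rewrite DW SW1 SW2 pid_mx_block.
Qed.

End ConjugateTranspose.

Section BlockTriangularPowers.
Variable R : comUnitRingType.

Lemma exprS_block_top m n k (A : 'M[R]_m) (B : 'M[R]_(m, n)) :
  (block_mx A B 0 0 : 'M_(m + n)) ^+ k.+1 = block_mx (A ^+ k.+1) (A ^+ k *m B) 0 0.
Proof.
elim: k => [|k IHk]; first by rewrite !expr1 expr0 mul1mx.
rewrite exprS IHk -mulmxE mulmx_block !mulmx0 !mul0mx !addr0 mulmxA.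
have AexprS j : A *m A ^+ j = A ^+ j.+1 by rewrite exprS.
by rewrite !AexprS.
Qed.

Lemma exprS_block_right m n k (B : 'M[R]_(m, n)) (D : 'M[R]_n) :
  (block_mx 0 B 0 D : 'M_(m + n)) ^+ k.+1 = block_mx 0 (B *m D ^+ k) 0 (D ^+ k.+1).
Proof.
elim: k => [|k IHk]; first by rewrite !expr1 expr0 mulmx1.
rewrite exprSr IHk -mulmxE mulmx_block !mulmx0 !mul0mx !addr0 !add0r -mulmxA.
have DexprSr j : D ^+ j *m D = D ^+ j.+1 by rewrite exprSr.
by rewrite !DexprSr.
Qed.

Lemma unitmx_expr n k (A : 'M[R]_n) : A \in unitmx -> A ^+ k \in unitmx.
Proof.
move=> Aunit; elim: k => [|k IHk]; first by rewrite expr0 unitmx1.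
by rewrite exprS -mulmxE unitmx_mul Aunit.
Qed.

Lemma unitmx_exprS n k (A : 'M[R]_n) : (A ^+ k.+1 \in unitmx) = (A \in unitmx).
Proof.
apply/idP/idP=> [|/unitmx_expr//].
by rewrite exprS -mulmxE unitmx_mul => /andP[].
Qed.

Lemma block_top_exprS_eq m n k (A : 'M[R]_m) (B : 'M[R]_(m, n)) (M : 'M[R]_m) :
  (block_mx A B 0 0 : 'M_(m + n)) ^+ k.+1 = block_mx M 0 0 0 -> M \in unitmx ->
  B = 0.
Proof.
rewrite exprS_block_top => /eq_block_mx[AkM AkB0 _ _] Munit.
have Akunit : A ^+ k \in unitmx by rewrite unitmx_expr // -(unitmx_exprS k) AkM.
by rewrite -(mulKmx Akunit B) AkB0 mulmx0.
Qed.

Lemma block_right_exprS_eq m n k (B : 'M[R]_(m, n)) (D : 'M[R]_n) (M : 'M[R]_n) :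
  (block_mx 0 B 0 D : 'M_(m + n)) ^+ k.+1 = block_mx 0 0 0 M -> M \in unitmx ->
  B = 0.
Proof.
rewrite exprS_block_right => /eq_block_mx[_ BDk0 _ DkM] Munit.
have Dkunit : D ^+ k \in unitmx by rewrite unitmx_expr // -(unitmx_exprS k) DkM.
by rewrite -(mulmxK Dkunit B) BDk0 mul0mx.
Qed.

End BlockTriangularPowers.

Section BlockCorners.
Variable R : pzRingType.

Lemma copid_mx_block r p : copid_mx r = block_mx 0 0 0 1%:M :> 'M[R]_(r + p).
Proof.
rewrite /copid_mx pid_mx_block [1%:M]scalar_mx_block opp_block_mx add_block_mx.
by rewrite !subrr !oppr0 !addr0.
Qed.

Lemma mul_block_corner_mx m1 m2 n1 n2 (M : 'M[R]_m1)
    (Y : 'M[R]_(m1 + m2, n1 + n2)) :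
  block_mx M 0 0 (0 : 'M_m2) *m Y = block_mx (M *m ulsubmx Y) (M *m ursubmx Y) 0 0.
Proof. by rewrite -{1}[Y]submxK mulmx_block !mul0mx !addr0. Qed.

Lemma mul_mx_copid_block m1 m2 r p (Y : 'M[R]_(m1 + m2, r + p)) :
  Y *m copid_mx r = block_mx 0 (ursubmx Y) 0 (drsubmx Y).
Proof.
by rewrite copid_mx_block -{1}[Y]submxK mulmx_block !mulmx0 !mulmx1 !addr0 !add0r.
Qed.

Lemma mul_block_corner_copid r p (M : 'M[R]_r) (Y : 'M[R]_(r + p)) :
  block_mx M 0 0 (0 : 'M_p) *m Y *m copid_mx r = block_mx 0 (M *m ursubmx Y) 0 0.
Proof.
by rewrite mul_block_corner_mx mul_mx_copid_block block_mxKur block_mxKdr.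
Qed.

End BlockCorners.

Section UnitarySimilarity.
Variables (F : numClosedFieldType) (n : nat) (U : 'M[F]_n).
Hypothesis Uunitary : U \is unitarymx.

Lemma mulmx_trmxC_unitary : U^t* *m U = 1%:M.
Proof. by rewrite -[U^t*]mul1mx mulmxKtV. Qed.

Lemma mulKtmx m (A : 'M[F]_(n, m)) : U^t* *m (U *m A) = A.
Proof. by rewrite mulmxA mulmx_trmxC_unitary mul1mx. Qed.

Lemma unitary_similar_mul (A B : 'M[F]_n) :
  U *m A *m U^t* *m (U *m B *m U^t*) = U *m (A *m B) *m U^t*.
Proof. by rewrite -!mulmxA mulKtmx. Qed.

Lemma unitary_similar_expr (A : 'M[F]_n) k :
  (U *m A *m U^t*) ^+ k = U *m A ^+ k *m U^t*.
Proof.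
elim: k => [|k IHk]; first by rewrite !expr0 mulmx1 (unitarymxP Uunitary).
by rewrite !exprS -!mulmxE IHk unitary_similar_mul.
Qed.

Lemma unitary_similarZ c (A : 'M[F]_n) :
  c *: (U *m A *m U^t*) = U *m (c *: A) *m U^t*.
Proof. by rewrite scalemxAl scalemxAr. Qed.

Lemma unitary_similar_inj : injective (fun A : 'M[F]_n => U *m A *m U^t*).
Proof.
move=> A B /(congr1 (fun M => U^t* *m M *m U)).
by rewrite -!mulmxA !mulKtmx !mulmxA !mulmxKtV.
Qed.

Lemma unitary_similar_eq0 (A : 'M[F]_n) : U *m A *m U^t* = 0 -> A = 0.
Proof.
by move=> UAU0; apply: unitary_similar_inj; rewrite /= UAU0 mulmx0 mul0mx.
Qed.

Lemma unitary_similar_trmxC (A : 'M[F]_n) :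
  (U *m A *m U^t*)^t* = U *m A^t* *m U^t*.
Proof. by rewrite !trmxC_mul trmxCK mulmxA. Qed.

Lemma unitary_similar_normal (A : 'M[F]_n) :
  (U *m A *m U^t* \is normalmx) = (A \is normalmx).
Proof.
rewrite !qualifE unitary_similar_trmxC !unitary_similar_mul.
by rewrite (inj_eq unitary_similar_inj).
Qed.

End UnitarySimilarity.

Section Conditions.
Variables (F : numClosedFieldType) (n : nat).

(* [S], [P] and [E] play the roles of N N^*, N N^dagger and E_N. *)
Definition C1_to_C7 (S P E X : 'M[F]_n) : Prop :=
  (S *m X) \is normalmx \/
  (exists (c : F) (k : nat), [/\ c != 0, (0 < k)%N & (S *m X) ^+ k = c *: P]) \/
  (exists (c : F) (l k : nat), [/\ c != 0, (0 < l)%N, (0 < k)%N &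
      (S *m X) ^+ k = c *: S ^+ l]) \/
  (X *m E) \is normalmx \/
  (exists (c : F) (k : nat), [/\ c != 0, (0 < k)%N & (X *m E) ^+ k = c *: E]) \/
  P *m X *m E = 0 \/
  (exists k : nat, (0 < k)%N /\ S ^+ k *m X *m E = 0).

Lemma C1_to_C7_unitary_similar (U S P E X : 'M[F]_n) : U \is unitarymx ->
  let sim A := U *m A *m U^t* in
  C1_to_C7 (sim S) (sim P) (sim E) (sim X) -> C1_to_C7 S P E X.
Proof.
move=> Uu sim; rewrite /sim.
have simM := unitary_similar_mul Uu; have simX := unitary_similar_expr Uu.
have simI := unitary_similar_inj Uu.
case=> [|[|[|[|[|[|]]]]]].
- by rewrite simM unitary_similar_normal //; left.
- case=> c [k [cnz k_gt0]]; rewrite simM simX unitary_similarZ => /simI SXk.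
  by right; left; exists c, k.
- case=> c [l [k [cnz l_gt0 k_gt0]]].
  rewrite simM !simX unitary_similarZ => /simI SXk.
  by right; right; left; exists c, l, k.
- by rewrite simM unitary_similar_normal //; right; right; right; left.
- case=> c [k [cnz k_gt0]]; rewrite simM simX unitary_similarZ => /simI XEk.
  by do 4 right; left; exists c, k.
- rewrite !simM => /(unitary_similar_eq0 Uu) PXE0.
  by do 5 right; left.
- case=> k [k_gt0]; rewrite simX !simM => /(unitary_similar_eq0 Uu) SXE0.
  by do 6 right; exists k.
Qed.

End Conditions.

Lemma C1_to_C7_block (F : numClosedFieldType) r p (Q : 'M[F]_r)
    (Y : 'M[F]_(r + p)) :
  Q \in unitmx ->
  C1_to_C7 (block_mx Q 0 0 0) (pid_mx r) (copid_mx r) Y -> ursubmx Y = 0.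
Proof.
move=> Qunit; have QY2_0 : Q *m ursubmx Y = 0 -> ursubmx Y = 0.
  by move=> QY2; rewrite -(mulKmx Qunit (ursubmx Y)) QY2 mulmx0.
have scalar_unit m c (M : 'M[F]_m) : c != 0 -> M \in unitmx -> c *: M \in unitmx.
  by move=> cnz; rewrite unitmxZ // unitfE.
case=> [|[|[|[|[|[|]]]]]].
- by rewrite mul_block_corner_mx => /normalmx_block_top; apply: QY2_0.
- case=> c [[|k] [cnz // _]].
  rewrite mul_block_corner_mx pid_mx_block scale_block_mx !scaler0.
  by move/block_top_exprS_eq => QY2; apply/QY2_0/QY2/scalar_unit; rewrite ?unitmx1.
- case=> c [[|l] [[|k] [cnz // _ _]]].
  rewrite mul_block_corner_mx [block_mx Q _ _ _ ^+ _]exprS_block_top mulmx0.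
  rewrite scale_block_mx !scaler0 => /block_top_exprS_eq QY2.
  by apply/QY2_0/QY2/scalar_unit; rewrite ?unitmx_expr.
- by rewrite mul_mx_copid_block => /normalmx_block_right.
- case=> c [[|k] [cnz // _]].
  rewrite mul_mx_copid_block copid_mx_block scale_block_mx !scaler0.
  by move/block_right_exprS_eq; apply; apply: scalar_unit; rewrite ?unitmx1.
- rewrite pid_mx_block mul_block_corner_copid mul1mx -[RHS]block_mx0.
  by case/eq_block_mx.
- case=> [[|k] [// _]].
  rewrite exprS_block_top mulmx0 mul_block_corner_copid -[RHS]block_mx0.
  case/eq_block_mx=> _ QkY2_0 _ _.
  by rewrite -(mulKmx (unitmx_expr k.+1 Qunit) (ursubmx Y)) QkY2_0 mulmx0.
Qed.

Lemma svd_mulmx_trmxC (F : numClosedFieldType) r p q (Sigma : 'M[F]_r)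
    (U : 'M[F]_(r + p)) (V : 'M[F]_(r + q)) :
  let N := U *m block_mx Sigma 0 0 0 *m V^t* in V \is unitarymx ->
  N *m N^t* = U *m block_mx (Sigma *m Sigma^t*) 0 0 0 *m U^t*.
Proof.
move=> N Vu; rewrite /N !trmxC_mul trmxCK !mulmxA mulmxKtV // -(mulmxA U).
by rewrite trmxC_block !trmxC0 mulmx_block !mulmx0 !mul0mx !addr0.
Qed.

Lemma is_MP_inverse_unitary m n (N : 'M[C]_(m, n)) (G : 'M[C]_(n, m))
    (U : 'M[C]_m) (V : 'M[C]_n) :
  U \is unitarymx -> V \is unitarymx ->
  is_MP_inverse N G -> is_MP_inverse (U^t* *m N *m V) (V^t* *m G *m U).
Proof.
move=> Uu Vu [NGN GNG NGh GNh].
have AW : U^t* *m N *m V *m (V^t* *m G *m U) = U^t* *m (N *m G) *m U.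
  by rewrite !mulmxA mulmxtVK.
have WA : V^t* *m G *m U *m (U^t* *m N *m V) = V^t* *m (G *m N) *m V.
  by rewrite !mulmxA mulmxtVK.
split.
- by rewrite AW !mulmxA mulmxtVK // -[in RHS]NGN !mulmxA.
- by rewrite WA !mulmxA mulmxtVK // -[in RHS]GNG !mulmxA.
- by rewrite AW -{2}NGh !trmxC_mul trmxCK !mulmxA.
- by rewrite WA -{2}GNh !trmxC_mul trmxCK !mulmxA.
Qed.

Lemma svd_mulmx_pinv r p q (Sigma : 'M[C]_r)
    (U : 'M[C]_(r + p)) (V : 'M[C]_(r + q))
    (G : 'M[C]_(r + q, r + p)) :
  let N := U *m block_mx Sigma 0 0 0 *m V^t* in
  Sigma \in unitmx -> U \is unitarymx -> V \is unitarymx -> is_MP_inverse N G ->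
  N *m G = U *m pid_mx r *m U^t*.
Proof.
move=> N Sunit Uu Vu /(is_MP_inverse_unitary Uu Vu).
rewrite /N -!mulmxA mulKtmx // mulmxA mulmxKtV // => -[DWD _ DWh _].
by rewrite -(block_pinv_proj Sunit DWD DWh) !mulmxA mulmxtVK.
Qed.

Theorem lemma2p2 (r p q : nat)
  (N : 'M[C]_(r + p, r + q)) (Ndag : 'M[C]_(r + q, r + p))
  (U : 'M[C]_(r + p)) (V : 'M[C]_(r + q)) (Sigma : 'M[C]_r)
  (X : 'M[C]_(r + p)) :
  is_MP_inverse N Ndag ->
  \rank N = r ->
  is_diag_mx Sigma ->
  (forall i : 'I_r, 0 < Sigma i i) ->
  U \is unitarymx -> V \is unitarymx ->
  N = U *m block_mx Sigma 0 0 0 *m V ^t* ->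
  let EN := 1%:M - N *m Ndag in
  let NNs := N *m N ^t* in
  ((NNs *m X) \is normalmx \/
      (exists (c1 : C) (k1 : nat), [/\ c1 != 0, (0 < k1)%N &
          (NNs *m X) ^+ k1 = c1 *: (N *m Ndag)]) \/
      (exists (c2 : C) (l k2 : nat), [/\ c2 != 0, (0 < l)%N, (0 < k2)%N &
          (NNs *m X) ^+ k2 = c2 *: NNs ^+ l]) \/
      (X *m EN) \is normalmx \/
      (exists (c3 : C) (k3 : nat), [/\ c3 != 0, (0 < k3)%N &
          (X *m EN) ^+ k3 = c3 *: EN]) \/
      N *m Ndag *m X *m EN = 0 \/
      (exists k4 : nat, (0 < k4)%N /\ NNs ^+ k4 *m X *m EN = 0)) ->
  exists (X1 : 'M[C]_r) (X2 : 'M[C]_(p, r)) (X4 : 'M[C]_p),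
    X = U *m block_mx X1 0 X2 X4 *m U ^t*.
Proof.
move=> MP _ Sdiag Spos Uu Vu NE EN NNs conds.
have Sunit := diag_mx_pos_unit Sdiag Spos.
have NNdE : N *m Ndag = U *m pid_mx r *m U^t*.
  by move: MP; rewrite NE; apply: svd_mulmx_pinv.
have ENE : EN = U *m copid_mx r *m U^t*.
  by rewrite /EN NNdE /copid_mx mulmxBr mulmxBl mulmx1 (unitarymxP Uu).
have NNsE : NNs = U *m block_mx (Sigma *m Sigma^t*) 0 0 0 *m U^t*.
  by rewrite /NNs NE svd_mulmx_trmxC.
set Y := U^t* *m X *m U.
have XE : X = U *m Y *m U^t*.
  by rewrite /Y !mulmxA (unitarymxP Uu) mul1mx mulmxtVK.
suff Y2_0 : ursubmx Y = 0.
  by exists (ulsubmx Y), (dlsubmx Y), (drsubmx Y); rewrite XE -Y2_0 submxK.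
apply: (C1_to_C7_block (Q := Sigma *m Sigma^t*)).
  by rewrite unitmx_mul Sunit map_unitmx unitmx_tr.
by apply: (C1_to_C7_unitary_similar Uu); rewrite -NNsE -NNdE -ENE -XE.
Qed.
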